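(* For all $\alpha\in(0,\pi/4]$, $\beta_0(\alpha)>t(\alpha)$, where $\beta_0(\alpha)=\tfrac12\arccos\!\left(\frac{-2\cos(4\alpha)+\cos(6\alpha)+2}{3-2\cos(4\alpha)}\right)$ and $t(\alpha)=\arctan\!\left(\frac{\sin(3\alpha)-\sin\alpha}{3\cos\alpha-\cos(3\alpha)}\right)$. *)

From Stdlib Require Import Reals.
Open Scope R_scope.

Definition beta0 (a : R) : R :=
  / 2 * acos ((- 2 * cos (4 * a) + cos (6 * a) + 2) / (3 - 2 * cos (4 * a))).

Definition t_fun (a : R) : R :=
  atan ((sin (3 * a) - sin a) / (3 * cos a - cos (3 * a))).

(* With c = cos (2 alpha), both sides become rational functions of c: the argument of acos in
   beta0 is (4c^3 - 4c^2 - 3c + 4) / (5 - 4c^2), and t = atan (tan alpha * c / (2 - c)) gives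
   cos (2t) = (2 - 2c^2 + c^3) / (2 - c^2).  Their difference is
   (1 - c)(2 + 8c + 2c^2 - 4c^3) / ((5 - 4c^2)(2 - c^2)), positive for 0 <= c < 1, and since
   acos is decreasing this says 2t < acos (...), i.e. t < beta0. *)
From Stdlib Require Import Reals Lra Psatz.
Open Scope R_scope.

Lemma cos_3a (x : R) : cos (3 * x) = 4 * cos x ^ 3 - 3 * cos x.
Proof.
  replace (3 * x) with (2 * x + x) by ring.
  rewrite cos_plus, sin_2a, cos_2a_cos.
  replace (2 * sin x * cos x * sin x) with (2 * cos x * (sin x * sin x)) by ring.
  rewrite <- Rsqr_def, sin2; unfold Rsqr; ring.
Qed.

Lemma sin_3a_sub_sin (x : R) : sin (3 * x) - sin x = 2 * sin x * cos (2 * x).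
Proof.
  rewrite form4.
  replace ((3 * x + x) / 2) with (2 * x) by field.
  replace ((3 * x - x) / 2) with x by field.
  ring.
Qed.

Lemma three_cos_sub_cos_3a (x : R) :
  3 * cos x - cos (3 * x) = 2 * cos x * (2 - cos (2 * x)).
Proof. rewrite cos_3a, cos_2a_cos; ring. Qed.

Lemma cos_2atan (u : R) : cos (2 * atan u) = (1 - u ^ 2) / (1 + u ^ 2).
Proof.
  assert (Hpos : 0 < 1 + u²) by (unfold Rsqr; nra).
  assert (Hcos2 : cos (atan u) * cos (atan u) = 1 / (1 + u²)).
  { rewrite cos_atan.
    replace (1 / sqrt (1 + u²) * (1 / sqrt (1 + u²)))
      with (1 / (sqrt (1 + u²) * sqrt (1 + u²))) by (field; apply sqrt_lt_R0 in Hpos; lra).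
    now rewrite sqrt_sqrt by lra. }
  rewrite cos_2a_cos, Rmult_assoc, Hcos2.
  unfold Rsqr in *; field; lra.
Qed.

Lemma cos_2atan_tan_mul (x r : R) : cos x <> 0 ->
  cos (2 * atan (tan x * r))
  = ((1 + cos (2 * x)) - (1 - cos (2 * x)) * r ^ 2)
    / ((1 + cos (2 * x)) + (1 - cos (2 * x)) * r ^ 2).
Proof.
  intro Hx.
  rewrite cos_2atan.
  replace (1 + cos (2 * x)) with (2 * cos x * cos x) by (rewrite cos_2a_cos; ring).
  replace (1 - cos (2 * x)) with (2 * sin x * sin x) by (rewrite cos_2a_sin; ring).
  assert (0 < cos x * cos x) by exact (Rsqr_pos_lt _ Hx).
  assert (0 <= (sin x * r) * (sin x * r)) by apply Rle_0_sqr.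
  unfold tan; field; repeat split; nra.
Qed.

Lemma lt_acos_of_lt_cos (x y : R) :
  -1 <= x -> 0 <= y <= PI -> x < cos y -> y < acos x.
Proof.
  intros Hx Hy Hlt.
  pose proof (COS_bound y); pose proof (acos_bound x).
  apply cos_decreasing_0; try lra.
  rewrite cos_acos; lra.
Qed.

Definition beta0_arg (c : R) : R := (4 * c ^ 3 - 4 * c ^ 2 - 3 * c + 4) / (5 - 4 * c ^ 2).

Definition cos_2t (c : R) : R := (2 - 2 * c ^ 2 + c ^ 3) / (2 - c ^ 2).

Lemma beta0_eq (a : R) : beta0 a = / 2 * acos (beta0_arg (cos (2 * a))).
Proof.
  pose proof (COS_bound (2 * a)).
  unfold beta0, beta0_arg.
  replace (4 * a) with (2 * (2 * a)) by ring.
  replace (6 * a) with (3 * (2 * a)) by ring.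
  rewrite cos_3a, (cos_2a_cos (2 * a)).
  do 3 f_equal; field; nra.
Qed.

Lemma t_fun_eq_atan_tan (a : R) : cos a <> 0 ->
  t_fun a = atan (tan a * (cos (2 * a) / (2 - cos (2 * a)))).
Proof.
  intro Ha.
  pose proof (COS_bound (2 * a)).
  unfold t_fun, tan.
  rewrite sin_3a_sub_sin, three_cos_sub_cos_3a.
  f_equal; field; lra.
Qed.

Lemma cos_2_t_fun (a : R) : cos a <> 0 -> cos (2 * t_fun a) = cos_2t (cos (2 * a)).
Proof.
  intro Ha.
  pose proof (COS_bound (2 * a)).
  rewrite t_fun_eq_atan_tan, cos_2atan_tan_mul by exact Ha.
  unfold cos_2t; set (c := cos (2 * a)) in *.
  field; repeat split; nra.
Qed.

Lemma beta0_arg_ge_m1 (c : R) : -1 <= c <= 1 -> -1 <= beta0_arg c.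
Proof.
  intro Hc.
  assert (Hden : 0 < 5 - 4 * c ^ 2) by nra.
  replace (beta0_arg c) with (-1 + (1 + c) * (2 * c - 3) ^ 2 / (5 - 4 * c ^ 2))
    by (unfold beta0_arg; field; lra).
  assert (0 <= (1 + c) * (2 * c - 3) ^ 2 / (5 - 4 * c ^ 2)); [|lra].
  apply Rle_mult_inv_pos; [apply Rmult_le_pos; [lra | apply pow2_ge_0] | exact Hden].
Qed.

Lemma beta0_arg_lt_cos_2t (c : R) : 0 <= c < 1 -> beta0_arg c < cos_2t c.
Proof.
  intro Hc.
  assert (0 < (5 - 4 * c ^ 2) * (2 - c ^ 2)) by (apply Rmult_lt_0_compat; nra).
  replace (cos_2t c) with
    (beta0_arg c + (1 - c) * (2 + 8 * c + 2 * c ^ 2 - 4 * c ^ 3)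
                   / ((5 - 4 * c ^ 2) * (2 - c ^ 2)))
    by (unfold beta0_arg, cos_2t; field; nra).
  assert (0 < (1 - c) * (2 + 8 * c + 2 * c ^ 2 - 4 * c ^ 3)
              / ((5 - 4 * c ^ 2) * (2 - c ^ 2))); [|lra].
  apply Rdiv_lt_0_compat; [apply Rmult_lt_0_compat|]; nra.
Qed.

Theorem mainTheorem15 : forall alpha : R,
  0 < alpha <= PI / 4 -> beta0 alpha > t_fun alpha.
Proof.
  intros a [Ha0 Ha1].
  pose proof PI_RGT_0.
  assert (Hcos : cos a <> 0) by (apply Rgt_not_eq, cos_gt_0; lra).
  assert (0 <= cos (2 * a) < 1).
  { split; [apply cos_ge_0; lra|].
    rewrite cos_2a_sin.
    assert (0 < sin a) by (apply sin_gt_0; lra); nra. }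
  destruct (Rlt_or_le (t_fun a) 0) as [Hneg | Hnonneg].
  - pose proof (acos_bound (beta0_arg (cos (2 * a)))).
    rewrite beta0_eq; lra.
  - assert (t_fun a < PI / 2) by exact (proj2 (atan_bound _)).
    assert (2 * t_fun a < acos (beta0_arg (cos (2 * a)))).
    { apply lt_acos_of_lt_cos; [apply beta0_arg_ge_m1; lra | lra |].
      rewrite cos_2_t_fun by exact Hcos.
      now apply beta0_arg_lt_cos_2t. }
    rewrite beta0_eq; lra.
Qed.
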